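(* Let $S,C,D,\Delta\ge1$, $\mathcal{X}\subseteq\mathbb{R}^D$ nonempty convex compact, and $f_h$, $h=1,\dots,C$, convex continuously differentiable with gradients $g_h$ satisfying $\|g_h(x)\|\le L_h$ on $\mathcal{X}$. Suppose the weights $W_{i,k}[J,h]\ge0$ are nonnegative and satisfy SLC with constant $M>0$, the server graph is complete (consensus step $x^I_{0,k+1}=\frac1S\sum_{J=1}^S x^J_{\Delta,k}$), all servers start from the same point $x^J_{0,0}=x_{0,0}\in\mathcal{X}$, and the step sizes satisfy $\alpha_k>0$, $\lim_{k\to\infty}\alpha_k=0$ and $\sum_{k=0}^\infty\alpha_k=\infty$. Let $x_{0,k}$ denote the common value of $x^J_{0,k}$ over $J$. Then $$\lim_{k\to\infty}\mathrm{dist}(x_{0,k},\mathcal{X}^* )=0\quad\text{and}\quad\lim_{k\to\infty}f(x_{0,k})=f^*.$$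
   Context: $\mathcal{P}_{\mathcal{X}}$ is Euclidean projection onto $\mathcal{X}$; $f=\sum_{h=1}^Cf_h$, $f^*=\min_{x\in\mathcal{X}}f(x)$, $\mathcal{X}^*=\{x\in\mathcal{X}:f(x)=f^*\}$, $\mathrm{dist}(x,\mathcal{X}^* )=\inf_{x^*\in\mathcal{X}^*}\|x-x^*\|$ (Euclidean norm). Weight matrices $W_{i,k}\in\mathbb{R}^{S\times C}$ ($0\le i\le\Delta-1$, $k\ge0$). Symmetric Learning Condition (SLC): there is $M>0$ with $\sum_{i=1}^{\Delta}\sum_{J=1}^S W_{i-1,k}[J,h]=M$ for all $k\ge0$ and all $h$. Iteration: for each $k\ge0$ and $i=1,\dots,\Delta$, $x^J_{i,k}=\mathcal{P}_{\mathcal{X}}\big[x^J_{i-1,k}-\alpha_k\sum_{h=1}^C W_{i-1,k}[J,h]\,g_h(x^J_{i-1,k})\big]$, followed by the consensus step. *)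

From Stdlib Require Import Reals.
From mathcomp Require Import ssreflect ssrfun ssrbool eqtype ssrnat seq fintype.
Set Implicit Arguments. Unset Strict Implicit.
Open Scope R_scope.

Definition rsum (n : nat) (F : 'I_n -> R) : R :=
  foldr Rplus 0 (map F (enum 'I_n)).

Definition vec (D : nat) := 'I_D -> R.
Definition vadd {D} (x y : vec D) : vec D := fun d => x d + y d.
Definition vsub {D} (x y : vec D) : vec D := fun d => x d - y d.
Definition vscale {D} (a : R) (x : vec D) : vec D := fun d => a * x d.
Definition vsum {D n} (F : 'I_n -> vec D) : vec D := fun d => rsum (fun j => F j d).
Definition dot {D} (x y : vec D) : R := rsum (fun d => x d * y d).
Definition norm {D} (x : vec D) : R := sqrt (dot x x).

Definition convex_set {D} (X : vec D -> Prop) : Prop :=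
  forall x y t, X x -> X y -> 0 <= t <= 1 ->
    X (vadd (vscale t x) (vscale (1 - t) y)).
Definition closed_set {D} (X : vec D -> Prop) : Prop :=
  forall (u : nat -> vec D) (l : vec D), (forall n, X (u n)) ->
    Un_cv (fun n => norm (vsub (u n) l)) 0 -> X l.
Definition bounded_set {D} (X : vec D -> Prop) : Prop :=
  exists B, forall x, X x -> norm x <= B.
(* Compactness in R^D (Heine-Borel): closed and bounded. *)
Definition compact_set {D} (X : vec D -> Prop) : Prop :=
  closed_set X /\ bounded_set X.

Definition convex_fun {D} (f : vec D -> R) : Prop :=
  forall x y t, 0 <= t <= 1 ->
    f (vadd (vscale t x) (vscale (1 - t) y)) <= t * f x + (1 - t) * f y.
Definition has_gradient_at {D} (f : vec D -> R) (gx : vec D) (x : vec D) : Prop :=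
  forall eps, 0 < eps -> exists delta, 0 < delta /\
    forall y, norm (vsub y x) < delta ->
      Rabs (f y - f x - dot gx (vsub y x)) <= eps * norm (vsub y x).
Definition continuous_vfun {D} (g : vec D -> vec D) : Prop :=
  forall x eps, 0 < eps -> exists delta, 0 < delta /\
    forall y, norm (vsub y x) < delta -> norm (vsub (g y) (g x)) < eps.
Definition C1_with_gradient {D} (f : vec D -> R) (g : vec D -> vec D) : Prop :=
  (forall x, has_gradient_at f (g x) x) /\ continuous_vfun g.

Definition is_proj {D} (X : vec D -> Prop) (y p : vec D) : Prop :=
  X p /\ forall q, X q -> norm (vsub y p) <= norm (vsub y q).

Definition is_inf (E : R -> Prop) (m : R) : Prop :=
  (forall r, E r -> m <= r) /\ (forall m', (forall r, E r -> m' <= r) -> m' <= m).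

Definition is_min_value {D} (f : vec D -> R) (X : vec D -> Prop) (fstar : R) : Prop :=
  (exists xs, X xs /\ f xs = fstar) /\ (forall x, X x -> fstar <= f x).

Definition argmin_set {D} (f : vec D -> R) (X : vec D -> Prop) (fstar : R) : vec D -> Prop :=
  fun x => X x /\ f x = fstar.

Definition is_dist {D} (A : vec D -> Prop) (x : vec D) (d : R) : Prop :=
  is_inf (fun r => exists a, A a /\ r = norm (vsub x a)) d.

(* Fix z in X. The projection onto X does not increase the distance to z, and the
   gradient inequality bounds <g_h(x), x - z> below by f_h(x) - f_h(z). Each inner step
   moves by O(alpha_k), so during a round every f_h(x^J_i) stays within O(alpha_k) of
   f_h(x_{0,k}). Summing the Delta inner steps, averaging over the servers (Jensen) and
   using SLC, which gives every f_h the same total weight M, yields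
     |x_{0,k+1} - z|^2 <= |x_{0,k} - z|^2 - (2 M / S) alpha_k (F(x_{0,k}) - F(z)) + O(alpha_k^2),
   hence the same recursion for dist(x_{0,k}, X^* )^2 when z ranges over X^*.
   As sum alpha_k = oo, the gap F(x_{0,k}) - f^* is small infinitely often; by compactness
   a small gap forces a small distance, and as alpha_k -> 0 the distance then stays small.
   Finally F is Lipschitz on X, so F(x_{0,k}) - f^* <= L dist(x_{0,k}, X^* ) -> 0. *)

From Stdlib Require Import Reals Lra Psatz ClassicalEpsilon FunctionalExtensionality Classical.
From mathcomp Require Import ssreflect ssrfun ssrbool eqtype ssrnat seq fintype.
From mathcomp Require Import zify.
Set Implicit Arguments.
Unset Strict Implicit.
Open Scope R_scope.

Lemma rsum_plus n (F G : 'I_n -> R) : rsum (fun i => F i + G i) = rsum F + rsum G.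
Proof. by rewrite /rsum; elim: (enum 'I_n) => [|i s IH] /=; rewrite ?IH; ring. Qed.

Lemma rsum_scal n (F : 'I_n -> R) c : rsum (fun i => c * F i) = c * rsum F.
Proof. by rewrite /rsum; elim: (enum 'I_n) => [|i s IH] /=; rewrite ?IH; ring. Qed.

Lemma rsum_minus n (F G : 'I_n -> R) : rsum (fun i => F i - G i) = rsum F - rsum G.
Proof.
have -> : (fun i => F i - G i) = (fun i => F i + -1 * G i).
  by apply: functional_extensionality => i; ring.
by rewrite rsum_plus rsum_scal; ring.
Qed.

Lemma rsum_const n c : rsum (fun _ : 'I_n => c) = INR n * c.
Proof.
have E T (s : seq T) : foldr Rplus 0 (map (fun _ => c) s) = INR (size s) * c.
  elim: s => [|a s IH]; first by rewrite /=; ring.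
  by rewrite [size _]/= S_INR [foldr _ _ _]/= IH; ring.
by rewrite /rsum E size_enum_ord.
Qed.

Lemma rsum_le n (F G : 'I_n -> R) : (forall i, F i <= G i) -> rsum F <= rsum G.
Proof.
move=> FG; rewrite /rsum; elim: (enum 'I_n) => [|i s IH] /=; first lra.
by have := FG i; lra.
Qed.

Lemma rsum_ge0 n (F : 'I_n -> R) : (forall i, 0 <= F i) -> 0 <= rsum F.
Proof. by move=> F0; rewrite -(Rmult_0_r (INR n)) -rsum_const; apply: rsum_le. Qed.

Lemma rsum_term n (F : 'I_n -> R) i : (forall j, 0 <= F j) -> F i <= rsum F.
Proof.
move=> F0; rewrite /rsum; have : i \in enum 'I_n by rewrite mem_enum.
elim: (enum 'I_n) => [|j s IH] //=; rewrite in_cons => /orP [/eqP <-|/IH].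
- suff : 0 <= foldr Rplus 0 (map F s) by lra.
  by elim: s {IH} => [|k s IHs] /=; [lra | have := F0 k; lra].
- by have := F0 j; lra.
Qed.

Lemma rsum_swap n m (F : 'I_n -> 'I_m -> R) :
  rsum (fun i => rsum (fun j => F i j)) = rsum (fun j => rsum (fun i => F i j)).
Proof.
rewrite /rsum; elim: (enum 'I_n) => [|i s IH] /=.
- by have := rsum_const m 0; rewrite /rsum Rmult_0_r.
- by rewrite IH; have := rsum_plus (F i) (fun j => foldr Rplus 0 (map (F^~ j) s)).
Qed.

(* [sum_lt m T] is [T 0 + ... + T (m - 1)]; unlike [sum_f_R0] it has exactly [m] terms. *)
Fixpoint sum_lt (m : nat) (T : nat -> R) : R :=
  if m is m'.+1 then sum_lt m' T + T m' else 0.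

Lemma sum_f_R0_sum_lt T m : sum_f_R0 T m = sum_lt m.+1 T.
Proof. elim: m => [|m IH] /=; first lra. by rewrite IH /=. Qed.

Lemma sum_lt_scal m (T : nat -> R) c : sum_lt m (fun i => c * T i) = c * sum_lt m T.
Proof. by elim: m => [|m IH] /=; rewrite ?IH; ring. Qed.

Lemma sum_lt_term m (T : nat -> R) i : (forall j, 0 <= T j) -> (i < m)%nat -> T i <= sum_lt m T.
Proof.
move=> T0; elim: m => [|m IH] //= Hi.
have S0 : 0 <= sum_lt m T by elim: m {IH Hi} => [|m IHm] /=; [lra | have := T0 m; lra].
case: (ltnP i m) => [/IH ?|Hmi]; first by have := T0 m; lra.
have -> : i = m by lia.
lra.
Qed.

Lemma sum_lt_rsum_swap m n (F : nat -> 'I_n -> R) :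
  sum_lt m (fun i => rsum (fun J => F i J)) = rsum (fun J => sum_lt m (fun i => F i J)).
Proof.
elim: m => [|m IH] /=; first by rewrite rsum_const; ring.
by rewrite IH -rsum_plus.
Qed.

(** * Euclidean geometry of [vec D] *)

Definition sqnorm {D} (v : vec D) : R := dot v v.

Lemma dot_ge0 {D} (v : vec D) : 0 <= dot v v.
Proof. by apply: rsum_ge0 => d; nra. Qed.

Lemma norm_ge0 {D} (v : vec D) : 0 <= norm v.
Proof. exact: sqrt_pos. Qed.

Lemma norm_sqr {D} (v : vec D) : norm v * norm v = sqnorm v.
Proof. by rewrite sqrt_sqrt //; apply: dot_ge0. Qed.

Lemma dot_sym {D} (u v : vec D) : dot u v = dot v u.
Proof. by congr rsum; apply: functional_extensionality => d; ring. Qed.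

Lemma dot_vscale_l {D} a (u v : vec D) : dot (vscale a u) v = a * dot u v.
Proof.
rewrite /dot -rsum_scal; congr rsum.
by apply: functional_extensionality => d; rewrite /vscale; ring.
Qed.

Lemma dot_vsum_l {D n} (F : 'I_n -> vec D) v : dot (vsum F) v = rsum (fun j => dot (F j) v).
Proof.
rewrite /dot /vsum -rsum_swap; congr rsum; apply: functional_extensionality => d.
by rewrite Rmult_comm -rsum_scal; congr rsum; apply: functional_extensionality => j; ring.
Qed.

Lemma dot_vsub_swap {D} (u a b : vec D) : dot u (vsub a b) = - dot u (vsub b a).
Proof.
have -> : - dot u (vsub b a) = -1 * dot u (vsub b a) by ring.
rewrite /dot -rsum_scal.
by congr rsum; apply: functional_extensionality => d; rewrite /vsub; ring.
Qed.

Lemma sqnorm_sub_scale {D} (a b : vec D) t :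
  sqnorm (fun d => a d - t * b d) = sqnorm a - 2 * t * dot a b + t * t * sqnorm b.
Proof.
rewrite /sqnorm /dot -!rsum_scal -!rsum_minus -rsum_plus.
by congr rsum; apply: functional_extensionality => d; ring.
Qed.

Lemma norm_vsub_sym {D} (a b : vec D) : norm (vsub a b) = norm (vsub b a).
Proof. by congr sqrt; congr rsum; apply: functional_extensionality => d; rewrite /vsub; ring. Qed.

Lemma Rle_of_sqr a b : 0 <= b -> a * a <= b * b -> a <= b.
Proof. by move=> *; nra. Qed.

Lemma discriminant_le a b c :
  0 <= a -> (forall t, 0 <= c + 2 * t * b + t * t * a) -> b * b <= a * c.
Proof.
move=> a0; case: (Rle_lt_or_eq_dec 0 a a0) => [apos|<-] Q.
- have Hq := Q (- b / a).
  have E : c + 2 * (- b / a) * b + - b / a * (- b / a) * a = c - b * b / a by field; lra.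
  rewrite E in Hq; have -> : b * b = a * (b * b / a) by field; lra.
  by apply: Rmult_le_compat_l; lra.
- case: (Req_dec b 0) => [->|b0]; first lra.
  have := Q (- (c + 1) / (2 * b)).
  have : 2 * (- (c + 1) / (2 * b)) * b = - (c + 1) by field.
  by move=> *; nra.
Qed.

Lemma Cauchy_Schwarz {D} (u v : vec D) : Rabs (dot u v) <= norm u * norm v.
Proof.
have CS : dot u v * dot u v <= sqnorm v * sqnorm u.
  apply: discriminant_le; first exact: dot_ge0.
  move=> t; have := dot_ge0 (fun d => u d - (- t) * v d).
  rewrite -/(sqnorm _) sqnorm_sub_scale /sqnorm; lra.
rewrite -!norm_sqr in CS; have := norm_ge0 u; have := norm_ge0 v => *.
by apply: Rle_of_sqr; [nra | rewrite -Rabs_mult Rabs_pos_eq; nra].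
Qed.

Lemma norm_triangle {D} (u v : vec D) : norm (vadd u v) <= norm u + norm v.
Proof.
have -> : vadd u v = (fun d => u d - (-1) * v d).
  by apply: functional_extensionality => d; rewrite /vadd; ring.
have := norm_ge0 u; have := norm_ge0 v; have := Cauchy_Schwarz u v; have := Rle_abs (dot u v).
move=> *; apply: Rle_of_sqr; first lra.
rewrite norm_sqr sqnorm_sub_scale -!norm_sqr; nra.
Qed.

Lemma norm_vscale {D} a (v : vec D) : norm (vscale a v) = Rabs a * norm v.
Proof.
rewrite /norm; have -> : dot (vscale a v) (vscale a v) = Rsqr a * dot v v.
  by rewrite dot_vscale_l dot_sym dot_vscale_l /Rsqr; ring.
by rewrite sqrt_mult_alt ?sqrt_Rsqr_abs //; exact: Rle_0_sqr.
Qed.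

Lemma norm_vsub_le {D} (a b : vec D) : norm (vsub a b) <= norm a + norm b.
Proof.
have -> : vsub a b = vadd a (vscale (-1) b).
  by apply: functional_extensionality => d; rewrite /vsub /vadd /vscale; ring.
by have := norm_triangle a (vscale (-1) b); rewrite norm_vscale Rabs_Ropp Rabs_R1; lra.
Qed.

Lemma norm_vsum {D n} (F : 'I_n -> vec D) : norm (vsum F) <= rsum (fun j => norm (F j)).
Proof.
rewrite /vsum /rsum; elim: (enum 'I_n) => [|j s IH] /=.
- have -> : (fun _ : 'I_D => 0) = vscale 0 (fun _ => 0).
    by apply: functional_extensionality => d; rewrite /vscale; ring.
  by rewrite norm_vscale Rabs_R0; lra.
- by apply: Rle_trans (norm_triangle (F j) _) _; lra.
Qed.

Lemma coord_le_norm {D} (v : vec D) d : Rabs (v d) <= norm v.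
Proof.
have := @rsum_term _ (fun e => v e * v e) d (fun e => ltac:(nra)).
rewrite -/(dot v v) -/(sqnorm v) -norm_sqr => vd.
by apply: Rle_of_sqr; [exact: norm_ge0 | rewrite -Rabs_mult Rabs_pos_eq; nra].
Qed.

(** * Sequences and sequential compactness *)

Definition increasing (phi : nat -> nat) : Prop := forall n, (phi n < phi n.+1)%nat.

Lemma increasing_ge phi : increasing phi -> forall n, (n <= phi n)%nat.
Proof. by move=> Hphi; elim=> [|n IH] //; have := Hphi n; lia. Qed.

Lemma increasing_mono phi : increasing phi -> forall m p, (m <= p)%nat -> (phi m <= phi p)%nat.
Proof.
move=> Hphi m; elim=> [|p IH] Hmp; first by have -> : m = 0%nat by lia.
case: (ltnP p m) => [?|/IH]; first by have -> : m = p.+1 by lia.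
by have := Hphi p; lia.
Qed.

Lemma increasing_comp phi psi :
  increasing phi -> increasing psi -> increasing (fun n => phi (psi n)).
Proof.
move=> Hphi Hpsi n; have := Hpsi n => lt_psi.
by have := Hphi (psi n); have := increasing_mono Hphi lt_psi; lia.
Qed.

Lemma Un_cv_subseq u l phi : increasing phi -> Un_cv u l -> Un_cv (fun n => u (phi n)) l.
Proof.
move=> Hphi Hu eps /Hu [N HN]; exists N => n /leP Hn.
by apply: HN; apply/leP; have := increasing_ge Hphi n; lia.
Qed.

Lemma Un_cv_const c : Un_cv (fun _ => c) c.
Proof. by move=> eps eps0; exists 0%nat => n _; rewrite /R_dist Rminus_diag Rabs_R0. Qed.

Lemma inv_INR_small eps : 0 < eps -> exists N, forall n, (N <= n)%nat -> / (INR n + 1) < eps.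
Proof.
move=> eps0; have [N [HN N0]] := archimed_cor1 eps eps0; exists N => n /leP Hn.
have := le_INR _ _ Hn; have := lt_0_INR _ N0 => *.
by apply: Rle_lt_trans HN; apply: Rinv_le_contravar; lra.
Qed.

Lemma Un_cv_inv_INR : Un_cv (fun n => / (INR n + 1)) 0.
Proof.
move=> eps /inv_INR_small [N HN]; exists N => n /leP /HN Hn.
rewrite /R_dist Rminus_0_r Rabs_pos_eq //.
by apply/Rlt_le/Rinv_0_lt_compat; have := pos_INR n; lra.
Qed.

Lemma Un_cv_le_0 (u v : nat -> R) c :
  (forall n, 0 <= u n <= c * v n) -> Un_cv v 0 -> Un_cv u 0.
Proof.
move=> Huv Hv eps eps0; have c1 : 0 < Rabs c + 1 by have := Rabs_pos c; lra.
set x := eps / (Rabs c + 1); have x0 : 0 < x by apply: Rdiv_lt_0_compat.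
have Ex : (Rabs c + 1) * x = eps by rewrite /x; field; lra.
have [N HN] := Hv x x0; exists N => n /HN; rewrite /R_dist !Rminus_0_r => Hvn.
have [u0 uv] := Huv n; rewrite Rabs_pos_eq //.
have := Rle_abs (c * v n); rewrite Rabs_mult => cv.
have : Rabs c * Rabs (v n) <= Rabs c * x by apply: Rmult_le_compat_l; [exact: Rabs_pos | lra].
lra.
Qed.

Lemma increasing_choice (P : nat -> nat -> Prop) :
  (forall N n, exists p, (N <= p)%nat /\ P n p) ->
  exists phi, increasing phi /\ forall n, P n (phi n).
Proof.
move=> HP; have [pick Hpick] := @choice (nat * nat) nat (fun Nn p => (Nn.1 <= p)%nat /\ P Nn.2 p)
  (fun Nn => HP Nn.1 Nn.2).
exists (fix phi n := if n is m.+1 then pick ((phi m).+1, m.+1) else pick (0%nat, 0%nat)).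
by split; [move=> n; exact: (proj1 (Hpick (_, _))) | case=> [|n]; exact: (proj2 (Hpick (_, _)))].
Qed.

Lemma bounded_Rseq_cv_subseq (u : nat -> R) B : (forall n, Rabs (u n) <= B) ->
  exists phi, increasing phi /\ exists l, Un_cv (fun n => u (phi n)) l.
Proof.
move=> Hu; have [l Hl] : exists l, ValAdh u l.
  apply: (Bolzano_Weierstrass u _ (compact_P3 (- B) B)) => n.
  by have := Hu n; have := Rle_abs (u n); have := Rle_abs (- u n); rewrite Rabs_Ropp; lra.
have near N n : exists p, (N <= p)%nat /\ Rabs (u p - l) < / (INR n + 1).
  have pos : 0 < / (INR n + 1) by apply: Rinv_0_lt_compat; have := pos_INR n; lra.
  have [|p [/leP Np Hp]] := Hl (disc l (mkposreal _ pos)) N; last by exists p.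
  by exists (mkposreal _ pos).
have [phi [Hphi Hnear]] := increasing_choice near.
exists phi; split=> //; exists l => eps /inv_INR_small [N HN]; exists N => n /leP Hn.
exact: Rlt_trans (Hnear n) (HN n Hn).
Qed.

Lemma bounded_seq_cv_subseq {D} (u : nat -> vec D) B : (forall n, norm (u n) <= B) ->
  exists phi, increasing phi /\ exists l : vec D,
    Un_cv (fun n => norm (vsub (u (phi n)) l)) 0.
Proof.
move=> Hu.
have coords (s : seq 'I_D) : exists phi, increasing phi /\ exists l : vec D,
    forall d, d \in s -> Un_cv (fun n => u (phi n) d) (l d).
  elim: s => [|d s [phi [Hphi [l Hl]]]].
    by exists id; split=> [n|]; [| exists (fun _ => 0)].
  have [|psi [Hpsi [a Ha]]] := @bounded_Rseq_cv_subseq (fun n => u (phi n) d) B.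
    by move=> n; apply: Rle_trans (Hu (phi n)); exact: coord_le_norm.
  exists (fun n => phi (psi n)); split; first exact: increasing_comp.
  exists (fun e => if e == d then a else l e) => e; rewrite in_cons.
  case: (eqVneq e d) => [-> _ | _ /= /Hl]; first exact: Ha.
  exact: (Un_cv_subseq (u := fun n => u (phi n) e)).
have [phi [Hphi [l Hl]]] := coords (enum 'I_D).
exists phi; split=> //; exists l; rewrite -sqrt_0.
apply: continuity_seq; first exact: continuity_pt_sqrt (Rle_refl 0).
rewrite -(Rmult_0_r (INR D)) -rsum_const /dot /rsum.
elim: (enum 'I_D) Hl => [|d s IH] Hl /=; first exact: Un_cv_const.
have Hd : Un_cv (fun n => vsub (u (phi n)) l d) 0.
  have := CV_minus _ _ _ _ (Hl d (mem_head _ _)) (Un_cv_const (l d)).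
  by rewrite Rminus_diag.
have := CV_mult _ _ _ _ Hd Hd; rewrite Rmult_0_l => Hd2.
have := CV_plus _ _ _ _ Hd2 (IH (fun e He => Hl e (@mem_behead _ (d :: s) e He))).
by rewrite Rplus_0_l.
Qed.

Lemma compact_cv_subseq {D} (X : vec D -> Prop) (u : nat -> vec D) :
  compact_set X -> (forall n, X (u n)) ->
  exists phi, increasing phi /\ exists l, X l /\ Un_cv (fun n => norm (vsub (u (phi n)) l)) 0.
Proof.
move=> [Xclosed [B HB]] Xu.
have [phi [Hphi [l Hl]]] := bounded_seq_cv_subseq (fun n => HB _ (Xu n)).
by exists phi; split=> //; exists l; split=> //; exact: Xclosed Hl.
Qed.

Lemma le_of_le_plus_eps a b c :
  0 <= c -> (forall e, 0 < e <= 1 -> a <= b + e * c) -> a <= b.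
Proof.
move=> c0 Hab; case: (Rle_or_lt a b) => // ba.
set e := Rmin 1 ((a - b) / (2 * (c + 1))).
have e0 : 0 < e by apply: Rmin_pos; [lra | apply: Rdiv_lt_0_compat; lra].
have : e * (c + 1) <= (a - b) / 2.
  have -> : (a - b) / 2 = (a - b) / (2 * (c + 1)) * (c + 1) by field; lra.
  by apply: Rmult_le_compat_r; [lra | exact: Rmin_r].
by have := Hab e (conj e0 (Rmin_l _ _)); nra.
Qed.

Lemma proj_variational {D} (X : vec D -> Prop) y p z :
  convex_set X -> is_proj X y p -> X z -> dot (vsub y p) (vsub z p) <= 0.
Proof.
move=> Xconv [Xp Hp] Xz; set a := vsub y p; set b := vsub z p.
apply: (le_of_le_plus_eps (b := 0) (c := sqnorm b / 2)) => [|t [t0 t1]].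
  by have := dot_ge0 b; rewrite /sqnorm; lra.
have := Hp _ (Xconv z p t Xz Xp (conj (Rlt_le _ _ t0) t1)).
have -> : vsub y (vadd (vscale t z) (vscale (1 - t) p)) = (fun d => a d - t * b d).
  by apply: functional_extensionality => d; rewrite /a /b /vsub /vadd /vscale; ring.
move=> Hq; have : norm a * norm a <= norm (fun d => a d - t * b d) * norm (fun d => a d - t * b d).
  by apply: Rmult_le_compat => //; exact: norm_ge0.
by rewrite !norm_sqr sqnorm_sub_scale; nra.
Qed.

Lemma proj_sqnorm_le {D} (X : vec D -> Prop) y p z :
  convex_set X -> is_proj X y p -> X z -> sqnorm (vsub p z) <= sqnorm (vsub y z).
Proof.
move=> Xconv Hp Xz; have := proj_variational Xconv Hp Xz.
have -> : vsub y z = (fun d => vsub y p d - 1 * vsub z p d).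
  by apply: functional_extensionality => d; rewrite /vsub; ring.
rewrite sqnorm_sub_scale -!norm_sqr norm_vsub_sym; have := norm_ge0 (vsub y p); nra.
Qed.

Lemma proj_norm_le {D} (X : vec D -> Prop) y p z :
  convex_set X -> is_proj X y p -> X z -> norm (vsub p z) <= norm (vsub y z).
Proof.
move=> Xconv Hp Xz; apply: Rle_of_sqr; first exact: norm_ge0.
by rewrite !norm_sqr; exact: proj_sqnorm_le Hp Xz.
Qed.

Lemma convex_mean {D} (X : vec D -> Prop) S (v : 'I_S -> vec D) :
  (1 <= S)%nat -> convex_set X -> (forall J, X (v J)) -> X (vscale (/ INR S) (vsum v)).
Proof.
move=> S1 Xconv Xv.
suff mean (s : seq 'I_S) :
    s <> [::] -> X (fun d => / INR (size s) * foldr Rplus 0 (map (fun j => v j d) s)).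
  rewrite /vscale /vsum /rsum -[in INR _](size_enum_ord S); apply: mean => E.
  by have := size_enum_ord S; rewrite E /=; lia.
elim: s => [|a [|b s] IH] // _.
- have -> : (fun d => / INR (size [:: a]) * foldr Rplus 0 [seq v j d | j <- [:: a]]) = v a.
    by apply: functional_extensionality => d /=; field.
  exact: Xv.
- set n := INR (size (b :: s)); have n0 : 0 < n by apply: lt_0_INR => /=; lia.
  have inv01 : 0 <= / (n + 1) <= 1.
    by split; [apply/Rlt_le/Rinv_0_lt_compat | rewrite -Rinv_1; apply: Rinv_le_contravar]; lra.
  have := Xconv _ _ _ (Xv a) (IH (fun E => ltac:(done))) inv01.
  congr X; apply: functional_extensionality => d.
  rewrite /vadd /vscale -/n; have -> : INR (size [:: a, b & s]) = n + 1 by rewrite /n -S_INR.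
  by rewrite /=; field; lra.
Qed.

Lemma sqr_mean_le_mean_sqr S (a : 'I_S -> R) c : (1 <= S)%nat ->
  (/ INR S * rsum a - c) * (/ INR S * rsum a - c) <= / INR S * rsum (fun J => (a J - c) * (a J - c)).
Proof.
move=> S1; have S0 : 0 < INR S by apply: lt_0_INR; lia.
set m := / INR S * rsum a - c.
have : 0 <= rsum (fun J => (a J - c - m) * (a J - c - m)) by apply: rsum_ge0 => J; exact: Rle_0_sqr.
have -> : (fun J => (a J - c - m) * (a J - c - m)) =
          (fun J => (a J - c) * (a J - c) + -2 * m * a J + (2 * m * c + m * m)).
  by apply: functional_extensionality => J; ring.
rewrite !rsum_plus rsum_scal !rsum_const.
have -> : rsum a = INR S * (m + c) by rewrite /m; field; lra.
move=> H; apply: (Rmult_le_reg_l (INR S)) => //.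
by rewrite -(Rmult_assoc (INR S) (/ INR S)) Rinv_r; lra.
Qed.

Lemma sqnorm_mean_le {D} S (v : 'I_S -> vec D) z : (1 <= S)%nat ->
  sqnorm (vsub (vscale (/ INR S) (vsum v)) z) <= / INR S * rsum (fun J => sqnorm (vsub (v J) z)).
Proof.
move=> S1; rewrite /sqnorm /dot rsum_swap -rsum_scal; apply: rsum_le => d.
exact: sqr_mean_le_mean_sqr.
Qed.

Lemma convex_gradient_ineq {D} (f : vec D -> R) gy y z :
  convex_fun f -> has_gradient_at f gy y -> f y - f z <= dot gy (vsub y z).
Proof.
move=> fconv Hgrad; set v := vsub z y; set n := norm v.
rewrite dot_vsub_swap -/v; apply: (le_of_le_plus_eps (c := n)) => [|e [e0 _]].
  exact: norm_ge0.
have [del [del0 Hdel]] := Hgrad e e0.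
set t := Rmin (1 / 2) (del / (n + 1)).
have n0 : 0 <= n by exact: norm_ge0.
have t0 : 0 < t by apply: Rmin_pos; [lra | apply: Rdiv_lt_0_compat; lra].
have t1 : t <= 1 / 2 by exact: Rmin_l.
set p := vadd (vscale t z) (vscale (1 - t) y).
have Hpy : vsub p y = vscale t v.
  by apply: functional_extensionality => d; rewrite /p /v /vsub /vadd /vscale; ring.
have Hnp : norm (vsub p y) = t * n by rewrite Hpy norm_vscale Rabs_pos_eq //; lra.
have Hnear : norm (vsub p y) < del.
  have : t * (n + 1) <= del.
    have -> : del = del / (n + 1) * (n + 1) by field; lra.
    by apply: Rmult_le_compat_r; [lra | exact: Rmin_r].
  by rewrite Hnp; nra.
have := Hdel p Hnear; rewrite Hnp Hpy dot_sym dot_vscale_l dot_sym => Happrox.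
have := fconv z y t (ltac:(lra)); rewrite -/p => Hconv.
have := Rle_abs (- (f p - f y - t * dot gy v)); rewrite Rabs_Ropp => Habs.
apply: (Rmult_le_reg_l t) => //; nra.
Qed.

Lemma convex_lipschitz {D} (f : vec D -> R) gy Lf y z :
  convex_fun f -> has_gradient_at f gy y -> norm gy <= Lf ->
  f y - f z <= Lf * norm (vsub y z).
Proof.
move=> fconv Hgrad HL; apply: Rle_trans (convex_gradient_ineq z fconv Hgrad) _.
apply: Rle_trans (Rle_abs _) _; apply: Rle_trans (Cauchy_Schwarz _ _) _.
exact: Rmult_le_compat_r (norm_ge0 _) HL.
Qed.

Lemma sum_convex_lipschitz {D C} (X : vec D -> Prop) (f : 'I_C -> vec D -> R) g L :
  (forall h, convex_fun (f h)) -> (forall h y, has_gradient_at (f h) (g h y) y) ->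
  (forall h y, X y -> norm (g h y) <= L h) ->
  forall y z, X y -> rsum (fun h => f h y) - rsum (fun h => f h z) <= rsum L * norm (vsub y z).
Proof.
move=> fconv Hgrad HL y z Xy; rewrite -rsum_minus Rmult_comm -rsum_scal.
by apply: rsum_le => h; rewrite Rmult_comm; exact: convex_lipschitz (Hgrad h y) (HL h y Xy).
Qed.

Lemma bound_ge0 {D} (X : vec D -> Prop) (g : vec D -> vec D) Lg :
  (exists y, X y) -> (forall y, X y -> norm (g y) <= Lg) -> 0 <= Lg.
Proof. by move=> [y Xy] /(_ y Xy); have := norm_ge0 (g y); lra. Qed.

(** * Descent with vanishing perturbations *)

Section PerturbedDescent.
Variables (e a phi : nat -> R) (c C0 : R).
Hypothesis c0 : 0 < c.
Hypothesis C00 : 0 <= C0.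
Hypothesis a_pos : forall k, 0 < a k.
Hypothesis a_cv : Un_cv a 0.
Hypothesis a_sum : cv_infty (fun n => sum_f_R0 a n).
Hypothesis e0 : forall k, 0 <= e k.
Hypothesis phi0 : forall k, 0 <= phi k.
Hypothesis descent : forall k, e k.+1 <= e k - c * a k * phi k + a k * a k * C0.

Lemma eventually_small_steps b : 0 < b ->
  exists N, forall k, (N <= k)%nat -> a k * C0 <= b /\ a k * a k * C0 <= b.
Proof.
move=> b0; set beta := Rmin 1 (b / (C0 + 1)).
have beta0 : 0 < beta by apply: Rmin_pos; [lra | apply: Rdiv_lt_0_compat; lra].
have [N HN] := a_cv beta0; exists N => k /leP /HN.
rewrite /R_dist Rminus_0_r Rabs_pos_eq => [ak|]; last exact/Rlt_le/a_pos.
have ak1 : a k <= 1 by apply: Rlt_le; apply: Rlt_le_trans ak (Rmin_l _ _).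
have akC : a k * (C0 + 1) <= b.
  have -> : b = b / (C0 + 1) * (C0 + 1) by field; lra.
  by apply: Rmult_le_compat_r; [lra | apply: Rlt_le; apply: Rlt_le_trans ak (Rmin_r _ _)].
have := a_pos k; split; nra.
Qed.

(* Descending by [b * a k] forever would bound the divergent partial sums of [a]. *)
Lemma no_uniform_descent b N : 0 < b -> ~ (forall k, (N <= k)%nat -> e k.+1 <= e k - b * a k).
Proof.
move=> b0 Hdesc.
have bound m : e (N + m).+1 + b * sum_f_R0 a (N + m) <= e N.+1 + b * sum_f_R0 a N.
  elim: m => [|m IH]; first by rewrite addn0; lra.
  have := Hdesc (N + m).+1 (ltac:(lia)); rewrite addnS /=; lra.
have [P HP] := a_sum ((e N.+1 + b * sum_f_R0 a N) / b).
have := HP (N + P)%nat (ltac:(apply/leP; lia)); have := bound P; have := e0 (N + P).+1.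
have -> : (e N.+1 + b * sum_f_R0 a N) / b = / b * (e N.+1 + b * sum_f_R0 a N) by field; lra.
move=> eNP Hb Hsum; have := Rmult_lt_compat_l b _ _ b0 Hsum.
by rewrite -Rmult_assoc Rinv_r; lra.
Qed.

Lemma descent_of_gap_large k eta :
  a k * C0 <= c * eta / 2 -> eta <= phi k -> e k.+1 <= e k - c * eta / 2 * a k.
Proof.
move=> small Hphi; have dk := descent k; have ak := a_pos k.
have : c * a k * eta <= c * a k * phi k by apply: Rmult_le_compat_l; nra.
have : a k * (a k * C0) <= a k * (c * eta / 2) by apply: Rmult_le_compat_l; lra.
lra.
Qed.

Lemma ascent_le k : e k.+1 <= e k + a k * a k * C0.
Proof.
have : 0 <= c * a k * phi k by apply: Rmult_le_pos; [have := a_pos k; nra | exact: phi0].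
by have := descent k; lra.
Qed.

Lemma gap_small_infinitely_often eta N : 0 < eta -> exists k, (N <= k)%nat /\ phi k < eta.
Proof.
move=> eta0; have b0 : 0 < c * eta / 2 by apply: Rdiv_lt_0_compat; nra.
have [N1 HN1] := eventually_small_steps b0.
apply: NNPP => Hnone; apply: (no_uniform_descent (N := maxn N N1) b0) => k Hk.
have [small _] := HN1 k (ltac:(lia)).
apply: descent_of_gap_large => //.
by apply: Rnot_lt_le => Hphi; apply: Hnone; exists k; split=> //; lia.
Qed.

Lemma perturbed_descent_cv :
  (forall del, 0 < del -> exists eta, 0 < eta /\ forall k, phi k < eta -> e k < del) -> Un_cv e 0.
Proof.
move=> level eps eps0; set del := eps / 3.
have [eta [eta0 Hlevel]] := level del (ltac:(rewrite /del; lra)).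
have min0 : 0 < Rmin (c * eta / 2) del by apply: Rmin_pos; [nra | rewrite /del; lra].
have [N1 HN1] := eventually_small_steps min0.
have step k : (N1 <= k)%nat -> e k.+1 <= Rmax (e k) (2 * del).
  move=> /HN1 [s1 s2]; have := Rmin_l (c * eta / 2) del; have := Rmin_r (c * eta / 2) del => m1 m2.
  case: (Rlt_or_le (phi k) eta) => [/Hlevel ek | Hphi].
  - by apply: Rle_trans (Rmax_r _ _); have := ascent_le k; lra.
  - have small : a k * C0 <= c * eta / 2 by lra.
    have := descent_of_gap_large small Hphi.
    have : 0 <= c * eta / 2 * a k by apply: Rmult_le_pos; [nra | exact/Rlt_le/a_pos].
    by move=> *; apply: Rle_trans (Rmax_l _ _); lra.
have [k0 [Nk0 phik0]] := gap_small_infinitely_often N1 eta0.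
have after m : e (k0.+1 + m)%nat <= 2 * del.
  elim: m => [|m IH].
  - rewrite addn0; have := ascent_le k0; have := Hlevel k0 phik0; have [_ s2] := HN1 k0 Nk0.
    by have := Rmin_r (c * eta / 2) del; lra.
  - rewrite addnS; apply: Rle_trans (step (k0.+1 + m)%nat (ltac:(lia))) _.
    exact: Rmax_lub IH (Rle_refl _).
exists k0.+1 => n /leP Hn; rewrite /R_dist Rminus_0_r Rabs_pos_eq //.
have -> : n = (k0.+1 + (n - k0.+1))%nat by lia.
by have := after (n - k0.+1)%nat; rewrite /del; lra.
Qed.

End PerturbedDescent.

(** * Distances and minimizers on compact sets *)

Lemma glb_exists (E : R -> Prop) :
  (exists r, E r) -> (exists m, forall r, E r -> m <= r) -> exists m, is_inf E m.
Proof.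
move=> [r Er] [m Hm].
have bnd : bound (fun r => E (- r)) by exists (- m) => s /Hm ?; lra.
have ne : exists s, E (- s) by exists (- r); rewrite Ropp_involutive.
have [M [HMub HMlub]] := completeness _ bnd ne.
exists (- M); split=> [s Es | m' Hm'].
- have : - s <= M by apply: HMub; rewrite Ropp_involutive.
  lra.
- suff : M <= - m' by lra.
  by apply: HMlub => s /Hm' ?; lra.
Qed.

Section Distance.
Variables (D : nat) (A : vec D -> Prop).

Lemma dist_exists a : A a -> forall y, exists d, is_dist A y d.
Proof.
move=> Aa y; apply: glb_exists; first by exists (norm (vsub y a)), a.
by exists 0 => r [z [_ ->]]; exact: norm_ge0.
Qed.

Lemma dist_ge0 y d : is_dist A y d -> 0 <= d.
Proof. by move=> [_ Hglb]; apply: Hglb => r [z [_ ->]]; exact: norm_ge0. Qed.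

Lemma dist_le y d z : is_dist A y d -> A z -> d <= norm (vsub y z).
Proof. by move=> [Hlb _] Az; apply: Hlb; exists z. Qed.

Lemma dist_approx y d e : is_dist A y d -> 0 < e -> exists z, A z /\ norm (vsub y z) < d + e.
Proof.
move=> [_ Hglb] e0; apply: NNPP => Hnone.
suff : d + e <= d by lra.
apply: Hglb => r [z [Az ->]]; apply: Rnot_lt_le => Hz.
by apply: Hnone; exists z.
Qed.

(* [q = sqrt (d'^2 - r)] is a lower bound of the distances [|y - z|], z in [A]. *)
Lemma dist_sqr_le y y' d d' r : is_dist A y d -> is_dist A y' d' ->
  (forall z, A z -> sqnorm (vsub y' z) <= sqnorm (vsub y z) + r) -> d' * d' <= d * d + r.
Proof.
move=> Hd Hd' Hstep; have d0 := dist_ge0 Hd; have d0' := dist_ge0 Hd'.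
case: (Rle_or_lt (d' * d' - r) 0) => [neg|pos]; first by nra.
set q := sqrt (d' * d' - r).
have qq : q * q = d' * d' - r by rewrite sqrt_sqrt; lra.
have q0 : 0 <= q := sqrt_pos _.
suff qd : q <= d by nra.
apply: (proj2 Hd) => _ [z [Az ->]]; apply: Rle_of_sqr; first exact: norm_ge0.
have := Hstep z Az; rewrite qq -!norm_sqr => Hz.
have := dist_le Hd' Az => Hd'z; nra.
Qed.

End Distance.

Section CompactMinimization.
Variables (D : nat) (X : vec D -> Prop) (F : vec D -> R) (Lc : R).
Hypothesis Lc0 : 0 <= Lc.
Hypothesis F_lipschitz : forall y z, X y -> F y - F z <= Lc * norm (vsub y z).
Hypothesis X_compact : compact_set X.

Lemma lipschitz_limit_le (v : nat -> vec D) l c c0 :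
  X l -> Un_cv (fun n => norm (vsub (v n) l)) 0 -> (forall n, F (v n) <= c n) -> Un_cv c c0 ->
  F l <= c0.
Proof.
move=> Xl Hv Hc c_cv.
apply: (Rle_cv_lim (Un := fun _ => F l) (Vn := fun n => c n + Lc * norm (vsub (v n) l))).
- by move=> n; have := F_lipschitz (y := l) (v n) Xl; rewrite norm_vsub_sym; have := Hc n; lra.
- exact: Un_cv_const.
- have := CV_plus _ _ _ _ c_cv (CV_mult _ _ _ _ (Un_cv_const Lc) Hv).
  by rewrite Rmult_0_r Rplus_0_r.
Qed.

Lemma near_inf_limit_le (u : nat -> vec D) m phi l :
  increasing phi -> X l -> Un_cv (fun n => norm (vsub (u (phi n)) l)) 0 ->
  (forall n, F (u n) < m + / (INR n + 1)) -> F l <= m.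
Proof.
move=> Hphi Xl Hl Hu.
apply: (lipschitz_limit_le Xl Hl (c := fun n => m + / (INR (phi n) + 1))) => [n|].
  exact/Rlt_le/Hu.
have := CV_plus _ _ _ _ (Un_cv_const m) (Un_cv_subseq Hphi Un_cv_inv_INR).
by rewrite Rplus_0_r.
Qed.

Lemma min_exists : (exists y, X y) -> exists fstar, is_min_value F X fstar.
Proof.
move=> [y0 Xy0]; have [B HB] := proj2 X_compact.
have lb : exists m, forall r, (exists y, X y /\ r = F y) -> m <= r.
  exists (F y0 - Lc * (2 * B)) => _ [y [Xy ->]].
  have := F_lipschitz (y := y0) y Xy0; have := norm_vsub_le y0 y; have := HB _ Xy0; have := HB _ Xy.
  by move=> *; nra.
have [m [Hlb Hglb]] := glb_exists (ex_intro _ (F y0) (ex_intro _ y0 (conj Xy0 erefl))) lb.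
have near n : exists y, X y /\ F y < m + / (INR n + 1).
  apply: NNPP => Hnone.
  have : 0 < / (INR n + 1) by apply: Rinv_0_lt_compat; have := pos_INR n; lra.
  suff : m + / (INR n + 1) <= m by lra.
  apply: Hglb => _ [y [Xy ->]]; apply: Rnot_lt_le => Hy.
  by apply: Hnone; exists y.
have [u Hu] := choice _ near.
have [phi [Hphi [l [Xl Hl]]]] := compact_cv_subseq X_compact (fun n => proj1 (Hu n)).
have Fl := near_inf_limit_le Hphi Xl Hl (fun n => proj2 (Hu n)).
exists (F l); split; first by exists l.
by move=> y Xy; have := Hlb (F y) (ex_intro _ y (conj Xy erefl)); lra.
Qed.

Section Argmin.
Variable fstar : R.
Hypothesis F_min : is_min_value F X fstar.

Lemma argmin_near_of_gap_small del : 0 < del -> exists eta, 0 < eta /\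
  forall y, X y -> F y < fstar + eta -> exists z, argmin_set F X fstar z /\ norm (vsub y z) < del.
Proof.
move=> del0; apply: NNPP => Hnone.
have far n : exists y, X y /\ F y < fstar + / (INR n + 1) /\
    forall z, argmin_set F X fstar z -> del <= norm (vsub y z).
  apply: NNPP => Hnear; apply: Hnone; exists (/ (INR n + 1)).
  split; first by apply: Rinv_0_lt_compat; have := pos_INR n; lra.
  move=> y Xy Fy; apply: NNPP => Hz; apply: Hnear; exists y; do 2!split=> //.
  by move=> z Az; apply: Rnot_lt_le => yz; apply: Hz; exists z.
have [u Hu] := choice _ far.
have [phi [Hphi [l [Xl Hl]]]] := compact_cv_subseq X_compact (fun n => proj1 (Hu n)).
have Al : argmin_set F X fstar l.
  split=> //; apply: Rle_antisym; last exact: (proj2 F_min).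
  exact: near_inf_limit_le Hphi Xl Hl (fun n => proj1 (proj2 (Hu n))).
have [N HN] := Hl del del0; have := HN N (le_n N).
rewrite /R_dist Rminus_0_r Rabs_pos_eq; last exact: norm_ge0.
by have := proj2 (proj2 (Hu (phi N))) l Al; lra.
Qed.

Lemma gap_le_dist y d : X y -> is_dist (argmin_set F X fstar) y d -> F y - fstar <= Lc * d.
Proof.
move=> Xy Hd; apply: (le_of_le_plus_eps (c := Lc)) => // e [e0 _].
have [z [[Xz Fz] yz]] := dist_approx Hd e0.
have : Lc * norm (vsub y z) <= Lc * (d + e) by apply: Rmult_le_compat_l; lra.
by have := F_lipschitz (y := y) z Xy; rewrite Fz; lra.
Qed.

Lemma argmin_dist_cv (y : nat -> vec D) (a : nat -> R) c C0 :
  0 < c -> 0 <= C0 -> (forall k, 0 < a k) -> Un_cv a 0 -> cv_infty (fun n => sum_f_R0 a n) ->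
  (forall k, X (y k)) ->
  (forall k z, argmin_set F X fstar z ->
     sqnorm (vsub (y k.+1) z) <= sqnorm (vsub (y k) z) - c * a k * (F (y k) - fstar) + a k * a k * C0) ->
  (exists d, (forall k, is_dist (argmin_set F X fstar) (y k) (d k)) /\ Un_cv d 0) /\
  Un_cv (fun k => F (y k)) fstar.
Proof.
move=> c0 C00 a_pos a_cv a_sum Xy Hrec.
have [xs [Xxs Fxs]] := proj1 F_min.
have [d Hd] := choice _ (fun k => @dist_exists _ (argmin_set F X fstar) xs (conj Xxs Fxs) (y k)).
have d0 k : 0 <= d k := dist_ge0 (Hd k).
have gap0 k : 0 <= F (y k) - fstar by have := proj2 F_min _ (Xy k); lra.
have d2_cv : Un_cv (fun k => d k * d k) 0.
  apply: (perturbed_descent_cv (phi := fun k => F (y k) - fstar) c0 C00 a_pos a_cv a_sum) => //.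
  - by move=> k; apply: Rmult_le_pos.
  - move=> k; suff : d k.+1 * d k.+1 <= d k * d k + (- c * a k * (F (y k) - fstar) + a k * a k * C0).
      by lra.
    by apply: dist_sqr_le (Hd k) (Hd k.+1) _ => z Az; have := Hrec k z Az; lra.
  - move=> del del0; have [eta [eta0 Hnear]] := argmin_near_of_gap_small (sqrt_lt_R0 _ del0).
    exists eta; split=> // k Hk; have [z [Az yz]] := Hnear (y k) (Xy k) (ltac:(lra)).
    have := dist_le (Hd k) Az; have := sqrt_sqrt _ (Rlt_le _ _ del0); have := d0 k.
    by move=> *; nra.
have d_cv : Un_cv d 0.
  have -> : d = (fun k => sqrt (d k * d k)).
    by apply: functional_extensionality => k; rewrite sqrt_square.
  rewrite -sqrt_0; apply: continuity_seq d2_cv; exact: continuity_pt_sqrt (Rle_refl 0).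
split; first by exists d.
have gap_cv : Un_cv (fun k => F (y k) - fstar) 0.
  by apply: (Un_cv_le_0 (c := Lc)) d_cv => k; split; [| exact: gap_le_dist (Xy k) (Hd k)].
move=> eps /gap_cv [N HN]; exists N => n /HN.
by rewrite /R_dist Rminus_0_r.
Qed.

End Argmin.
End CompactMinimization.

(** * The server iterations *)

Section ServerIterations.
Variables (S C D Delta : nat) (X : vec D -> Prop).
Variables (f : 'I_C -> vec D -> R) (g : 'I_C -> vec D -> vec D) (L : 'I_C -> R).
Variables (W : nat -> nat -> 'I_S -> 'I_C -> R) (M : R) (alpha : nat -> R).
Variables (x : nat -> nat -> 'I_S -> vec D) (x00 : vec D).
Hypothesis S1 : (1 <= S)%nat.
Hypothesis X_convex : convex_set X.
Hypothesis f_convex : forall h, convex_fun (f h).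
Hypothesis g_gradient : forall h y, has_gradient_at (f h) (g h y) y.
Hypothesis g_bound : forall h y, X y -> norm (g h y) <= L h.
Hypothesis L0 : forall h, 0 <= L h.
Hypothesis W0 : forall i k J h, 0 <= W i k J h.
Hypothesis W_sum : forall k h, sum_lt Delta (fun i => rsum (fun J => W i k J h)) = M.
Hypothesis alpha0 : forall k, 0 < alpha k.
Hypothesis x00_in : X x00.
Hypothesis x_init : forall J, x 0%nat 0%nat J = x00.
Hypothesis x_step : forall k i J, (i < Delta)%nat ->
  is_proj X (vsub (x i k J) (vscale (alpha k) (vsum (fun h => vscale (W i k J h) (g h (x i k J))))))
    (x i.+1 k J).
Hypothesis x_consensus : forall k I, x 0%nat k.+1 I = vscale (/ INR S) (vsum (fun J => x Delta k J)).

Lemma iterate_in_set k i J : (i <= Delta)%nat -> X (x i k J).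
Proof.
elim: k i J => [|k IH] [|i] J Hi.
- by rewrite x_init.
- by case: (x_step 0 J Hi).
- by rewrite x_consensus; apply: convex_mean => // J'; exact: IH.
- by case: (x_step k.+1 J Hi).
Qed.

Lemma iterate_common k J J' : x 0%nat k J = x 0%nat k J'.
Proof. by case: k => [|k]; rewrite ?x_init ?x_consensus. Qed.

Lemma weight_le_M k i J h : (i < Delta)%nat -> W i k J h <= M.
Proof.
move=> iD; rewrite -(W_sum k h).
apply: Rle_trans (sum_lt_term (T := fun i => rsum (fun J => W i k J h)) _ iD).
  exact: rsum_term (fun J => W0 i k J h).
by move=> j; apply: rsum_ge0.
Qed.

Lemma direction_norm_le k i J y : (i < Delta)%nat -> X y ->
  norm (vsum (fun h => vscale (W i k J h) (g h y))) <= M * rsum L.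
Proof.
move=> iD Xy; apply: Rle_trans (norm_vsum _) _; rewrite -rsum_scal; apply: rsum_le => h.
rewrite norm_vscale Rabs_pos_eq //.
by apply: Rmult_le_compat => //; [exact: norm_ge0 | exact: weight_le_M | exact: g_bound].
Qed.

Lemma inner_step_norm_le k i J : (i < Delta)%nat ->
  norm (vsub (x i.+1 k J) (x i k J)) <= alpha k * (M * rsum L).
Proof.
move=> iD; have Xi := iterate_in_set k J (ltnW iD).
apply: Rle_trans (proj_norm_le X_convex (x_step k J iD) Xi) _.
set s := vsum _; have -> : vsub (vsub (x i k J) (vscale (alpha k) s)) (x i k J) = vscale (- alpha k) s.
  by apply: functional_extensionality => d; rewrite /vsub /vscale; ring.
rewrite norm_vscale Rabs_Ropp Rabs_pos_eq; last exact/Rlt_le/alpha0.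
by apply: Rmult_le_compat_l; [exact/Rlt_le/alpha0 | exact: direction_norm_le].
Qed.

Lemma value_drift k J h i : (i <= Delta)%nat ->
  f h (x 0%nat k J) - L h * INR i * (alpha k * (M * rsum L)) <= f h (x i k J).
Proof.
elim: i => [|i IH] iD; first by rewrite /=; lra.
have Xi := iterate_in_set k J (ltnW iD).
have := convex_lipschitz (x i.+1 k J) (f_convex h) (g_gradient h _) (g_bound h Xi).
rewrite norm_vsub_sym => Hlip.
have : L h * norm (vsub (x i.+1 k J) (x i k J)) <= L h * (alpha k * (M * rsum L)).
  by apply: Rmult_le_compat_l => //; exact: inner_step_norm_le.
by have := IH (ltnW iD); rewrite S_INR; lra.
Qed.

Lemma direction_dot_ge k i J z : (i < Delta)%nat ->
  rsum (fun h => W i k J h * (f h (x 0%nat k J) - f h z)) - INR Delta * alpha k * (M * rsum L) ^ 2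
  <= dot (vsub (x i k J) z) (vsum (fun h => vscale (W i k J h) (g h (x i k J)))).
Proof.
move=> iD; set K := M * rsum L; set Q := rsum (fun h => W i k J h * L h).
have Q0 : 0 <= Q by apply: rsum_ge0 => h; apply: Rmult_le_pos.
have QK : Q <= K.
  rewrite /K -rsum_scal; apply: rsum_le => h.
  by apply: Rmult_le_compat_r => //; exact: weight_le_M.
have drift : rsum (fun h => W i k J h * (f h (x 0%nat k J) - f h z)) - INR i * (alpha k * K) * Q
    <= rsum (fun h => W i k J h * dot (g h (x i k J)) (vsub (x i k J) z)).
  rewrite /Q -rsum_scal -rsum_minus; apply: rsum_le => h.
  have := value_drift k J h (ltnW iD).
  have := convex_gradient_ineq z (f_convex h) (g_gradient h (x i k J)).
  move=> Hg; rewrite -/K => Hd; have : f h (x 0%nat k J) - f h z - L h * INR i * (alpha k * K) <=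
                      dot (g h (x i k J)) (vsub (x i k J) z) by lra.
  move=> /(Rmult_le_compat_l _ _ _ (W0 i k J h)) H.
  by apply: Rle_trans H; apply: Req_le; ring.
rewrite dot_sym dot_vsum_l.
have -> : (fun h => dot (vscale (W i k J h) (g h (x i k J))) (vsub (x i k J) z)) =
          (fun h => W i k J h * dot (g h (x i k J)) (vsub (x i k J) z)).
  by apply: functional_extensionality => h; rewrite dot_vscale_l.
apply: Rle_trans drift; apply: Rplus_le_compat_l; apply: Ropp_le_contravar.
have iD' : INR i <= INR Delta by apply/le_INR/leP/ltnW.
have aK : 0 <= alpha k * K by apply: Rmult_le_pos; [exact/Rlt_le/alpha0 | exact: Rle_trans Q0 QK].
have : INR i * (alpha k * K) * Q <= INR Delta * (alpha k * K) * K.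
  by apply: Rmult_le_compat => //; [exact: Rmult_le_pos (pos_INR i) aK | exact: Rmult_le_compat_r].
by move=> H; apply: Rle_trans H (Req_le _ _ _); rewrite /K; ring.
Qed.

Lemma inner_step_sqnorm_le k i J z : (i < Delta)%nat -> X z ->
  sqnorm (vsub (x i.+1 k J) z) <= sqnorm (vsub (x i k J) z)
    - 2 * alpha k * rsum (fun h => W i k J h * (f h (x 0%nat k J) - f h z))
    + alpha k * alpha k * ((2 * INR Delta + 1) * (M * rsum L) ^ 2).
Proof.
move=> iD Xz; apply: Rle_trans (proj_sqnorm_le X_convex (x_step k J iD) Xz) _.
set s := vsum _.
have -> : vsub (vsub (x i k J) (vscale (alpha k) s)) z = (fun d => vsub (x i k J) z d - alpha k * s d).
  by apply: functional_extensionality => d; rewrite /vsub /vscale; ring.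
rewrite sqnorm_sub_scale -(norm_sqr s).
have := direction_dot_ge k J z iD; rewrite -/s => Hdot.
have := direction_norm_le k J iD (iterate_in_set k J (ltnW iD)); rewrite -/s => Hs.
have : norm s * norm s <= (M * rsum L) ^ 2 by rewrite /pow Rmult_1_r; have := norm_ge0 s; nra.
have a0 := alpha0 k; move=> Hs2.
have : alpha k * alpha k * (norm s * norm s) <= alpha k * alpha k * (M * rsum L) ^ 2.
  by apply: Rmult_le_compat_l; nra.
have : 2 * alpha k * (rsum (fun h => W i k J h * (f h (x 0%nat k J) - f h z)) -
          INR Delta * alpha k * (M * rsum L) ^ 2) <= 2 * alpha k * dot (vsub (x i k J) z) s.
  by apply: Rmult_le_compat_l; lra.
by move=> *; lra.
Qed.

Lemma round_sqnorm_le k J z m : (m <= Delta)%nat -> X z ->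
  sqnorm (vsub (x m k J) z) <= sqnorm (vsub (x 0%nat k J) z)
    - 2 * alpha k * sum_lt m (fun i => rsum (fun h => W i k J h * (f h (x 0%nat k J) - f h z)))
    + INR m * (alpha k * alpha k * ((2 * INR Delta + 1) * (M * rsum L) ^ 2)).
Proof.
elim: m => [|m IH] mD Xz; first by rewrite /=; lra.
have := inner_step_sqnorm_le k J mD Xz; have := IH (ltnW mD) Xz.
by rewrite S_INR /=; lra.
Qed.

Lemma consensus_sqnorm_le k J z : X z ->
  sqnorm (vsub (x 0%nat k.+1 J) z) <= sqnorm (vsub (x 0%nat k J) z)
    - 2 * M / INR S * alpha k * (rsum (fun h => f h (x 0%nat k J)) - rsum (fun h => f h z))
    + alpha k * alpha k * (INR Delta * ((2 * INR Delta + 1) * (M * rsum L) ^ 2)).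
Proof.
move=> Xz; have S0 : 0 < INR S by apply: lt_0_INR; lia.
rewrite x_consensus; apply: Rle_trans (sqnorm_mean_le _ _ S1) _.
set c := fun h => f h (x 0%nat k J) - f h z.
(* SLC: over a round every f_h receives the same total weight M. *)
have swap : rsum (fun J' => sum_lt Delta (fun i => rsum (fun h => W i k J' h * c h))) = M * rsum c.
  rewrite -sum_lt_rsum_swap.
  have -> : (fun i => rsum (fun J' => rsum (fun h => W i k J' h * c h))) =
            (fun i => rsum (fun h => c h * rsum (fun J' => W i k J' h))).
    apply: functional_extensionality => i; rewrite rsum_swap; congr rsum.
    by apply: functional_extensionality => h; rewrite -rsum_scal; congr rsum;
      apply: functional_extensionality => J'; ring.
  rewrite sum_lt_rsum_swap -rsum_scal; congr rsum; apply: functional_extensionality => h.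
  by rewrite sum_lt_scal W_sum; ring.
have round J' : sqnorm (vsub (x Delta k J') z) <= sqnorm (vsub (x 0%nat k J) z)
    + (-2 * alpha k) * sum_lt Delta (fun i => rsum (fun h => W i k J' h * c h))
    + INR Delta * (alpha k * alpha k * ((2 * INR Delta + 1) * (M * rsum L) ^ 2)).
  by have := round_sqnorm_le k J' (leqnn Delta) Xz; rewrite (iterate_common k J' J) /c; lra.
have := rsum_le round; rewrite !rsum_plus rsum_scal swap !rsum_const /c rsum_minus => Hsum.
apply: Rle_trans (Rmult_le_compat_l _ _ _ (Rlt_le _ _ (Rinv_0_lt_compat _ S0)) Hsum) _.
by apply: Req_le; field; lra.
Qed.

End ServerIterations.

Theorem theorem3
  (S C D Delta : nat) (HS : (1 <= S)%nat) (HC : (1 <= C)%nat)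
  (HD : (1 <= D)%nat) (HDelta : (1 <= Delta)%nat)
  (X : vec D -> Prop)
  (HXne : exists x, X x) (HXconv : convex_set X) (HXcomp : compact_set X)
  (f : 'I_C -> vec D -> R) (g : 'I_C -> vec D -> vec D) (L : 'I_C -> R)
  (Hfconv : forall h, convex_fun (f h))
  (HfC1 : forall h, C1_with_gradient (f h) (g h))
  (HgL : forall h x, X x -> norm (g h x) <= L h)
  (W : nat -> nat -> 'I_S -> 'I_C -> R)
  (HWnn : forall i k J h, 0 <= W i k J h)
  (HSLC : exists M, 0 < M /\ forall k h,
      sum_f_R0 (fun i => rsum (fun J => W i k J h)) (Delta - 1) = M)
  (alpha : nat -> R)
  (Hapos : forall k, 0 < alpha k)
  (Halim : Un_cv alpha 0)
  (Hasum : cv_infty (fun n => sum_f_R0 alpha n))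
  (x : nat -> nat -> 'I_S -> vec D)  (* x i k J = x^J_{i,k} *)
  (x00 : vec D) (Hx00 : X x00)
  (Hinit : forall J, x 0%nat 0%nat J = x00)
  (Hstep : forall k i J, (i < Delta)%nat ->
     is_proj X
       (vsub (x i k J)
             (vscale (alpha k) (vsum (fun h => vscale (W i k J h) (g h (x i k J))))))
       (x i.+1 k J))
  (Hcons : forall k I, x 0%nat k.+1 I = vscale (/ INR S) (vsum (fun J => x Delta k J))) :
  let F := fun y => rsum (fun h => f h y) in
  exists fstar, is_min_value F X fstar /\
    forall J : 'I_S,
      (exists d : nat -> R,
         (forall k, is_dist (argmin_set F X fstar) (x 0%nat k J) (d k)) /\ Un_cv d 0) /\
      Un_cv (fun k => F (x 0%nat k J)) fstar.
Proof.
move=> F.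
have L0 h : 0 <= L h := bound_ge0 HXne (HgL h).
have Hgrad h y : has_gradient_at (f h) (g h y) y := proj1 (HfC1 h) y.
have F_lip := sum_convex_lipschitz Hfconv Hgrad HgL.
have [fstar Fmin] := min_exists (rsum_ge0 L0) F_lip HXcomp HXne.
exists fstar; split=> // J.
have [M [M0 HM]] := HSLC.
have W_sum k h : sum_lt Delta (fun i => rsum (fun J => W i k J h)) = M.
  by rewrite -(HM k h) sum_f_R0_sum_lt; congr sum_lt; lia.
have S0 : 0 < INR S by apply: lt_0_INR; lia.
apply: (argmin_dist_cv (rsum_ge0 L0) F_lip HXcomp Fmin (c := 2 * M / INR S)
  (C0 := INR Delta * ((2 * INR Delta + 1) * (M * rsum L) ^ 2)) _ _ Hapos Halim Hasum).
- by apply: Rdiv_lt_0_compat; lra.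
- have := pos_INR Delta; have := pow2_ge_0 (M * rsum L) => *.
  by apply: Rmult_le_pos; [exact: pos_INR | apply: Rmult_le_pos; lra].
- by move=> k; exact: (iterate_in_set HS HXconv Hx00 Hinit Hstep Hcons k J (leq0n Delta)).
- move=> k z [Xz <-].
  exact: (consensus_sqnorm_le HS HXconv Hfconv Hgrad HgL L0 HWnn W_sum Hapos Hx00 Hinit Hstep Hcons
           k J Xz).
Qed.
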